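(* Let $\alpha\in\mathbb{C}$ and let $S_n(x)\sim\left(\left(\frac{e^t-1}{t}\right)^{\alpha},\ \log(1+t)\right)$. Then for $n\ge1$, $$S_n(x)=\sum_{l=0}^{n-1}\binom{n-1}{l}N_l^{(-n)}\,B_{n-l}^{(\alpha)}(x).$$
   Context: For invertible $g(t)$ (nonzero constant term) and delta series $f(t)$ ($f(0)=0$, nonzero coefficient of $t$), the Sheffer sequence $S_n(x)\sim(g(t),f(t))$ is the unique polynomial sequence with $\sum_{k\ge0}S_k(y)\frac{t^k}{k!}=\frac{1}{g(\bar f(t))}e^{y\bar f(t)}$ for all $y\in\mathbb{C}$, where $\bar f$ is the compositional inverse of $f$. Complex powers of series with constant term $1$ are defined by $h^a=\exp(a\log h)$. The Narumi numbers are defined by $\left(\frac{\log(1+t)}{t}\right)^a=\sum_{l\ge0}N_l^{(a)}\frac{t^l}{l!}$. The Bernoulli polynomials of order $\alpha$ are defined by $\left(\frac{t}{e^t-1}\right)^{\alpha} e^{xt}=\sum_{n\ge0}B_n^{(\alpha)}(x)\frac{t^n}{n!}$. *)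

(* Formal power series over a field F are represented by
   their (ordinary) coefficient sequences  nat -> F ;  a n = [t^n] a(t).
   Equality of series is pointwise equality (=1). *)
From HB Require Import structures.
From mathcomp Require Import all_boot all_order all_algebra.
Set Implicit Arguments. Unset Strict Implicit. Unset Printing Implicit Defensive.
Import Order.TTheory GRing.Theory Num.Theory.
Local Open Scope ring_scope.

Definition fps (F : fieldType) := nat -> F.

Section FPS.
Variable F : fieldType.
Implicit Types a b g h : fps F.

Definition oneS : fps F := fun n => (n == 0)%:R.
Definition Xs : fps F := fun n => (n == 1)%:R.
Definition addS a b : fps F := fun n => a n + b n.
Definition scaleS (c : F) a : fps F := fun n => c * a n.
Definition mulS a b : fps F := fun n => \sum_(i < n.+1) a i * b (n - i)%N.
Fixpoint powN a (k : nat) : fps F :=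
  if k is k'.+1 then mulS a (powN a k') else oneS.
(* exp g = sum_k g^k / k!   (meaningful for g 0 = 0; only k <= n contribute) *)
Definition expS g : fps F :=
  fun n => \sum_(k < n.+1) powN g k n / (k`!)%:R.
(* log h = sum_{k>=1} (-1)^(k+1) (h-1)^k / k   (for h 0 = 1) *)
Definition logS h : fps F :=
  fun n => \sum_(1 <= k < n.+1) (-1) ^+ k.+1 / k%:R * powN (addS h (scaleS (-1) oneS)) k n.
(* complex (here: field-valued) power  h^a = exp(a log h) *)
Definition powC (a : F) h : fps F := expS (scaleS a (logS h)).
(* multiplicative inverse: h = h0 (1 - u), 1/h = h0^-1 sum_k u^k *)
Definition invS h : fps F :=
  let u := fun n => - (h n / h 0%N) + (n == 0)%:R in
  fun n => (h 0%N)^-1 * \sum_(k < n.+1) powN u k n.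
(* composition f(h(t)) for h 0 = 0 *)
Definition compS (f : fps F) h : fps F := fun n => \sum_(k < n.+1) f k * powN h k n.

(* Sheffer sequence S_n ~ (g(t), f(t)):  g invertible, f delta series,
   fbar the compositional inverse of f, and
   sum_k S_k(y) t^k/k! = (1 / g(fbar t)) e^{y fbar t} for all y. *)
Definition Sheffer g (f : fps F) (S : nat -> {poly F}) : Prop :=
  [/\ g 0%N != 0, f 0%N = 0, f 1%N != 0 &
   exists fbar : fps F,
     [/\ fbar 0%N = 0, compS f fbar =1 Xs &
      forall y : F,
        (fun k => (S k).[y] / (k`!)%:R)
          =1 mulS (invS (compS g fbar)) (expS (scaleS y fbar))]].

(* shift: a(t) / t  for a 0 = 0 *)
Definition divX a : fps F := fun n => a n.+1.

Definition expm1_div_t : fps F := divX (expS Xs).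
Definition log1p : fps F := logS (addS oneS Xs).

(* Narumi numbers: (log(1+t)/t)^a = sum_l N_l^(a) t^l / l! *)
Definition narumi (a : F) (l : nat) : F :=
  (l`!)%:R * powC a (divX log1p) l.

(* Bernoulli polynomials of order alpha, evaluated at x:
   (t/(e^t-1))^alpha e^{x t} = sum_n B_n^(alpha)(x) t^n/n! *)
Definition bernoulliA (alpha : F) (n : nat) (x : F) : F :=
  (n`!)%:R * mulS (powC alpha (invS expm1_div_t)) (expS (scaleS x Xs)) n.

End FPS.

From HB Require Import structures.
From mathcomp Require Import all_boot all_order all_algebra.
From mathcomp Require Import boolp ring zify.
Import Order.TTheory GRing.Theory Num.Theory.
Local Open Scope ring_scope.
Set Implicit Arguments. Unset Strict Implicit. Unset Printing Implicit Defensive.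

(* Let w be the compositional inverse of f = log(1+t) and
   gam(t) = g(w(t))^-1 e^(x w(t)) the generating function, so that
   S_n(x) = n! [t^n] gam = (n-1)! [t^(n-1)] gam'.  Substituting t := f(t)
   turns gam into beta(t) = (t/(e^t-1))^alpha e^(x t), the generating
   function of the B_n^(alpha)(x).  Lagrange inversion for f = t psi,
   psi = log(1+t)/t, gives [t^(n-1)] gam' = [t^(n-1)] psi^(-n) beta', and
   psi^(-n) is the generating function of the N_l^(-n); expanding the
   product of exponential generating functions yields the formula. *)

Section Truncation.
Variable F : fieldType.
Implicit Types (a b : fps F) (p q : {poly F}).

Definition approx M a p := forall i, (i < M)%N -> a i = p`_i.

Definition trunc M a : {poly F} := \poly_(i < M) a i.

Lemma approx_trunc M a : approx M a (trunc M a).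
Proof. by move=> i hi; rewrite coef_poly hi. Qed.

Lemma approx_ext a b : (forall M, exists p, approx M a p /\ approx M b p) -> a = b.
Proof.
move=> h; apply/funext => i.
by have [p [-> // ->]] := h i.+1.
Qed.

Lemma approx_le M a p : approx M.+1 a p -> approx M a p.
Proof. by move=> h i hi; apply: h; apply: ltnW. Qed.

Lemma approx_eq M a p q :
  approx M a p -> (forall i, (i < M)%N -> p`_i = q`_i) -> approx M a q.
Proof. by move=> h e i hi; rewrite h // e. Qed.

Lemma approx_add M a b p q : approx M a p -> approx M b q -> approx M (addS a b) (p + q).
Proof. by move=> ha hb i hi; rewrite /addS coefD ha ?hb. Qed.

Lemma approx_mul M a b p q : approx M a p -> approx M b q -> approx M (mulS a b) (p * q).
Proof.
move=> ha hb i hi; rewrite /mulS coefM; apply: eq_bigr => j _.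
by rewrite ha ?hb //; [exact: leq_ltn_trans (leq_subr _ _) hi | exact: leq_ltn_trans (leq_ord j) hi].
Qed.

Lemma approx_one M : approx M (oneS F) 1.
Proof. by move=> i _; rewrite coef1. Qed.

Lemma approx_X M : approx M (Xs F) 'X.
Proof. by move=> i _; rewrite coefX. Qed.

Lemma approx_scale M c a p : approx M a p -> approx M (scaleS c a) (c *: p).
Proof. by move=> ha i hi; rewrite /scaleS coefZ ha. Qed.

End Truncation.

(* Series form a commutative ring under coefficientwise addition and the
   Cauchy product; the ring laws are inherited from {poly F} by truncation. *)
Section SeriesRing.
Variable F : fieldType.
Implicit Types a b : fps F.

Definition zeroS : fps F := fun _ => 0.
Definition oppS a : fps F := fun n => - a n.

HB.instance Definition _ := gen_eqMixin (fps F).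
HB.instance Definition _ := gen_choiceMixin (fps F).

Lemma addSA : associative (@addS F).
Proof. by move=> a b c; apply/funext => i; rewrite /addS addrA. Qed.
Lemma addSC : commutative (@addS F).
Proof. by move=> a b; apply/funext => i; rewrite /addS addrC. Qed.
Lemma add0S : left_id zeroS (@addS F).
Proof. by move=> a; apply/funext => i; rewrite /addS add0r. Qed.
Lemma addNS : left_inverse zeroS oppS (@addS F).
Proof. by move=> a; apply/funext => i; rewrite /addS addNr. Qed.

HB.instance Definition _ := GRing.isZmodule.Build (fps F) addSA addSC add0S addNS.

Lemma mulSA : associative (@mulS F).
Proof.
move=> a b c; apply: approx_ext => M.
exists (trunc M a * (trunc M b * trunc M c)); split.
  by apply: approx_mul; [|apply: approx_mul]; apply: approx_trunc.
by rewrite mulrA; apply: approx_mul; [apply: approx_mul|]; apply: approx_trunc.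
Qed.
Lemma mulSC : commutative (@mulS F).
Proof.
move=> a b; apply: approx_ext => M; exists (trunc M a * trunc M b); split.
  by apply: approx_mul; apply: approx_trunc.
by rewrite mulrC; apply: approx_mul; apply: approx_trunc.
Qed.
Lemma mul1S : left_id (oneS F) (@mulS F).
Proof.
move=> a; apply: approx_ext => M; exists (1 * trunc M a); split.
  by apply: approx_mul; [apply: approx_one | apply: approx_trunc].
by rewrite mul1r; apply: approx_trunc.
Qed.
Lemma mulSDl : left_distributive (@mulS F) (@addS F).
Proof.
move=> a b c; apply: approx_ext => M.
exists ((trunc M a + trunc M b) * trunc M c); split.
  by apply: approx_mul; [apply: approx_add|]; apply: approx_trunc.
by rewrite mulrDl; apply: approx_add; apply: approx_mul; apply: approx_trunc.
Qed.
Lemma oneS_neq0 : oneS F != (0 : fps F).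
Proof. by apply/eqP => /(congr1 (fun a : fps F => a 0%N)) /eqP; rewrite oner_eq0. Qed.

HB.instance Definition _ :=
  GRing.Zmodule_isComNzRing.Build (fps F) mulSA mulSC mul1S mulSDl oneS_neq0.

Lemma mulSE a b : mulS a b = a * b. Proof. by []. Qed.
Lemma oneSE : oneS F = 1. Proof. by []. Qed.

Lemma powNE a k : powN a k = a ^+ k.
Proof. by elim: k => //= k ->; rewrite exprS. Qed.

Lemma coefS_add a b i : (a + b) i = a i + b i. Proof. by []. Qed.
Lemma coefS_opp a i : (- a) i = - a i. Proof. by []. Qed.
Lemma coefS_sub a b i : (a - b) i = a i - b i. Proof. by []. Qed.
Lemma coefS_one i : (1 : fps F) i = (i == 0%N)%:R. Proof. by []. Qed.
Lemma coefS_mul a b i : (a * b) i = \sum_(j < i.+1) a j * b (i - j)%N. Proof. by []. Qed.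
Lemma coefS_mul0 a b : (a * b) 0%N = a 0%N * b 0%N.
Proof. by rewrite coefS_mul big_ord1. Qed.
Lemma coefS_exp0 a k : (a ^+ k) 0%N = a 0%N ^+ k.
Proof. by elim: k => [|k IH]; rewrite ?expr0 // !exprS coefS_mul0 IH. Qed.
Lemma coefS_sum (I : Type) (r : seq I) (P : pred I) (A : I -> fps F) i :
  (\sum_(k <- r | P k) A k) i = \sum_(k <- r | P k) A k i.
Proof. by apply: (big_rec2 (fun (y1 : fps F) y2 => y1 i = y2)) => // k y1 y2 _ <-. Qed.

Lemma approx_pow M a p k : approx M a p -> approx M (a ^+ k) (p ^+ k).
Proof.
move=> h; elim: k => [|k IH]; first by rewrite !expr0; apply: approx_one.
by rewrite !exprS; apply: approx_mul.
Qed.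

Definition constS (c : F) : fps F := scaleS c 1.

Lemma constS_E c i : constS c i = if i == 0%N then c else 0.
Proof. by rewrite /constS /scaleS coefS_one; case: (i == 0%N); rewrite ?mulr1 ?mulr0. Qed.
Lemma approx_const M c : approx M (constS c) c%:P.
Proof. by move=> i _; rewrite constS_E coefC. Qed.
Lemma scaleSE c a : scaleS c a = constS c * a.
Proof.
apply: approx_ext => M; exists (c%:P * trunc M a); split.
  by rewrite mul_polyC; apply: approx_scale; apply: approx_trunc.
by apply: approx_mul; [apply: approx_const | apply: approx_trunc].
Qed.
Lemma constS_opp c : constS (- c) = - constS c.
Proof. by apply/funext => i; rewrite coefS_opp !constS_E; case: ifP; rewrite ?oppr0. Qed.
Lemma constS_nat n : constS n%:R = n%:R.
Proof.
apply/funext => i; rewrite constS_E; elim: n => [|n IH]; first by case: ifP.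
by rewrite [in RHS]mulrS coefS_add coefS_one -IH mulrS; case: ifP; rewrite ?addr0.
Qed.
Lemma constS1 : constS 1 = 1.
Proof. exact: constS_nat 1. Qed.
Lemma coefS_constM c a i : (constS c * a) i = c * a i.
Proof.
rewrite coefS_mul big_ord_recl constS_E subn0 big1 ?addr0 // => k _.
by rewrite constS_E mul0r.
Qed.

Lemma coefS_X0 : Xs F 0%N = 0. Proof. by []. Qed.
Lemma coefS_XM0 a : (Xs F * a) 0%N = 0.
Proof. by rewrite coefS_mul0 mul0r. Qed.
Lemma coefS_XMS a i : (Xs F * a) i.+1 = a i.
Proof.
rewrite coefS_mul big_ord_recl /= /Xs mul0r add0r big_ord_recl /= mul1r subSS subn0.
by rewrite big1 ?addr0 // => k _; rewrite mul0r.
Qed.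
Lemma coefS_XnM k a i : (Xs F ^+ k * a) i = if (i < k)%N then 0 else a (i - k)%N.
Proof.
elim: k a i => [|k IH] a i; first by rewrite expr0 mul1r subn0.
rewrite exprS -mulrA; case: i => [|i]; first by rewrite coefS_XM0.
by rewrite coefS_XMS IH ltnS subSS.
Qed.

Lemma mulX_divX a : a 0%N = 0 -> Xs F * divX a = a.
Proof. by move=> a0; apply/funext => -[|i]; rewrite ?coefS_XM0 ?coefS_XMS. Qed.

Lemma coefS_mul_low a b n :
  (forall i, (i <= n)%N -> a i = 0) -> (a * b) n = 0.
Proof.
move=> ha; rewrite coefS_mul big1 // => k _; rewrite ha ?mul0r //.
by have := ltn_ord k; lia.
Qed.

Lemma coefS_mul_eq a b (c : fps F) n :
  (forall i, (i <= n)%N -> a i = b i) -> (a * c) n = (b * c) n.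
Proof.
move=> ab; apply/eqP; rewrite -subr_eq0 -coefS_sub -mulrBl; apply/eqP.
by apply: coefS_mul_low => i hi; rewrite coefS_sub ab ?subrr.
Qed.

End SeriesRing.

Section DerivComp.
Variable F : fieldType.
Implicit Types (a b h : fps F) (p q : {poly F}).

Definition derivS a : fps F := fun n => a n.+1 * n.+1%:R.

Lemma approx_deriv M a p : approx M.+1 a p -> approx M (derivS a) p^`().
Proof. by move=> h i hi; rewrite /derivS coef_deriv h // mulr_natr. Qed.

Lemma derivS_add a b : derivS (a + b) = derivS a + derivS b.
Proof. by apply/funext => i; rewrite /derivS !coefS_add mulrDl. Qed.
Lemma derivS_opp a : derivS (- a) = - derivS a.
Proof. by apply/funext => i; rewrite /derivS !coefS_opp mulNr. Qed.
Lemma derivS_sub a b : derivS (a - b) = derivS a - derivS b.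
Proof. by rewrite derivS_add derivS_opp. Qed.
Lemma derivS_const c : derivS (constS c) = 0.
Proof. by apply/funext => i; rewrite /derivS constS_E mul0r. Qed.
Lemma derivS1 : derivS 1 = 0.
Proof. by rewrite -constS1 derivS_const. Qed.
Lemma derivS_X : derivS (Xs F) = 1.
Proof. by apply/funext => -[|i]; rewrite /derivS /Xs coefS_one /= ?mul1r ?mul0r. Qed.

Lemma derivS_mul a b : derivS (a * b) = derivS a * b + a * derivS b.
Proof.
apply: approx_ext => M; exists ((trunc M.+1 a * trunc M.+1 b)^`()); split.
  by apply: approx_deriv; apply: approx_mul; apply: approx_trunc.
rewrite derivM; apply: approx_add; apply: approx_mul;
  by [apply: approx_deriv; apply: approx_trunc | apply: approx_le; apply: approx_trunc].
Qed.

Lemma derivS_pow a n : derivS (a ^+ n) = n%:R * a ^+ n.-1 * derivS a.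
Proof.
elim: n => [|n IH]; first by rewrite expr0 derivS1 !mul0r.
rewrite exprS derivS_mul IH; case: n {IH} => [|n] /=; first by rewrite !expr0; ring.
by rewrite exprS; ring.
Qed.

Lemma compS0 a h : compS a h 0%N = a 0%N.
Proof. by rewrite /compS big_ord1 /= /oneS /= mulr1. Qed.

Lemma sum_widen (G : nat -> F) n m : (n <= m)%N -> (forall k, (n <= k)%N -> G k = 0) ->
  \sum_(k < n) G k = \sum_(k < m) G k.
Proof.
move=> le h; rewrite -(subnKC le) big_split_ord /= [X in _ + X]big1 ?addr0 // => k _.
by apply: h; rewrite leq_addr.
Qed.

Lemma coef_exp_low p k i : p`_0 = 0 -> (i < k)%N -> (p ^+ k)`_i = 0.
Proof.
move=> p0; elim: k i => [|k IH] i hi //.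
rewrite exprS coefM big_ord_recl p0 mul0r add0r big1 // => j _.
rewrite IH ?mulr0 //=; have := ltn_ord j; rewrite /bump leq0n add1n; lia.
Qed.

Lemma coefS_exp_low a k i : a 0%N = 0 -> (i < k)%N -> (a ^+ k) i = 0.
Proof. by move=> a0 ik; rewrite -(mulX_divX a0) exprMn coefS_XnM ik. Qed.

Lemma approx_comp M a p h q : approx M a p -> approx M h q -> h 0%N = 0 ->
  approx M (compS a h) (p \Po q).
Proof.
move=> ha hh h0 i hi.
have q0 : q`_0 = 0 by rewrite -hh ?h0 //; lia.
rewrite /compS coef_comp_poly.
transitivity (\sum_(k < i.+1) p`_k * (q ^+ k)`_i).
  apply: eq_bigr => k _; rewrite ha; last by have := ltn_ord k; lia.
  by rewrite powNE (approx_pow k hh).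
rewrite (@sum_widen (fun k => p`_k * (q ^+ k)`_i) i.+1 (size p + i.+1)) ?leq_addl //; last first.
  by move=> k hk; rewrite coef_exp_low ?mulr0.
rewrite [RHS](@sum_widen (fun k => p`_k * (q ^+ k)`_i) (size p) (size p + i.+1)) ?leq_addr //.
by move=> k hk; rewrite nth_default ?mul0r.
Qed.

Section CompositionLaws.
Variable h : fps F.
Hypothesis h0 : h 0%N = 0.

Lemma compS_mul a b : compS (a * b) h = compS a h * compS b h.
Proof.
apply: approx_ext => M; exists ((trunc M a * trunc M b) \Po trunc M h); split.
  by apply: approx_comp => //; [apply: approx_mul|]; apply: approx_trunc.
by rewrite comp_polyM; apply: approx_mul; apply: approx_comp => //; apply: approx_trunc.
Qed.
Lemma compS_add a b : compS (a + b) h = compS a h + compS b h.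
Proof.
apply: approx_ext => M; exists ((trunc M a + trunc M b) \Po trunc M h); split.
  by apply: approx_comp => //; [apply: approx_add|]; apply: approx_trunc.
by rewrite comp_polyD; apply: approx_add; apply: approx_comp => //; apply: approx_trunc.
Qed.
Lemma compS_const c : compS (constS c) h = constS c.
Proof.
apply: approx_ext => M; exists (c%:P \Po trunc M h); split.
  by apply: approx_comp => //; [apply: approx_const | apply: approx_trunc].
by rewrite comp_polyC; apply: approx_const.
Qed.
Lemma compS1 : compS 1 h = 1.
Proof. by rewrite -constS1 compS_const. Qed.
Lemma compS_X : compS (Xs F) h = h.
Proof.
apply: approx_ext => M; exists ('X \Po trunc M h); split.
  by apply: approx_comp => //; [apply: approx_X | apply: approx_trunc].
by rewrite comp_polyX; apply: approx_trunc.
Qed.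

Lemma derivS_comp a : derivS (compS a h) = compS (derivS a) h * derivS h.
Proof.
apply: approx_ext => M; exists ((trunc M.+1 a \Po trunc M.+1 h)^`()); split.
  by apply: approx_deriv; apply: approx_comp => //; apply: approx_trunc.
rewrite deriv_comp; apply: approx_mul; last by apply: approx_deriv; apply: approx_trunc.
apply: approx_comp => //; first by apply: approx_deriv; apply: approx_trunc.
by apply: approx_le; apply: approx_trunc.
Qed.

Lemma compSA a (k : fps F) : k 0%N = 0 -> compS (compS a h) k = compS a (compS h k).
Proof.
move=> k0; apply: approx_ext => M.
exists ((trunc M a \Po trunc M h) \Po trunc M k); split.
  by apply: approx_comp => //; [apply: approx_comp => //|]; apply: approx_trunc.
rewrite -comp_polyA; apply: approx_comp; rewrite ?compS0 //; first exact: approx_trunc.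
by apply: approx_comp => //; apply: approx_trunc.
Qed.

Lemma coefS_comp_trunc a N i : (i < N)%N ->
  compS a h i = (\sum_(j < N) constS (a j) * h ^+ j) i.
Proof.
move=> iN; rewrite /compS; under eq_bigr => j _ do rewrite powNE.
rewrite coefS_sum; under [RHS]eq_bigr => j _ do rewrite coefS_constM.
by apply: (@sum_widen (fun j => a j * (h ^+ j) i)) => // j ij; rewrite coefS_exp_low ?mulr0.
Qed.

End CompositionLaws.

Lemma compS_Xr a : compS a (Xs F) = a.
Proof.
apply: approx_ext => M; exists (trunc M a \Po 'X); split.
  by apply: approx_comp => //; [apply: approx_trunc | apply: approx_X].
by rewrite comp_polyXr; apply: approx_trunc.
Qed.

End DerivComp.

(* exp, log and the multiplicative inverse in characteristic zero.  Each is
   characterised by a first-order differential equation, and such equations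
   have unique solutions with prescribed constant term (ode_unique); this is
   how the exponential laws of the power  h^a = exp(a log h)  are obtained. *)
Section ExpLog.
Variable F : fieldType.
Hypothesis charF0 : [pchar F] =i pred0.
Implicit Types (a b d g h q : fps F).

Lemma natf_neq0 n : n.+1%:R != 0 :> F.
Proof. by move/pcharf0P: charF0 => ->. Qed.
Lemma fact_neq0 n : n`!%:R != 0 :> F.
Proof. by move/pcharf0P: charF0 => ->; rewrite -lt0n fact_gt0. Qed.

Lemma expS0 g : expS g 0%N = 1.
Proof. by rewrite /expS big_ord1 /= /oneS /= divr1. Qed.
Lemma logS0 h : logS h 0%N = 0.
Proof. by rewrite /logS big_geq. Qed.
Lemma invS0 h : invS h 0%N = (h 0%N)^-1.
Proof. by rewrite /invS /= big_ord1 /= /oneS /= mulr1. Qed.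
Lemma powC0 c h : powC c h 0%N = 1.
Proof. exact: expS0. Qed.

Lemma approx_exp M g p : approx M g p -> g 0%N = 0 ->
  approx M (expS g) (\sum_(k < M) (k`!%:R)^-1 *: p ^+ k).
Proof.
move=> hg g0 i hi; have p0 : p`_0 = 0 by rewrite -hg ?g0 //; lia.
rewrite /expS coef_sum; transitivity (\sum_(k < i.+1) (k`!%:R)^-1 * (p ^+ k)`_i).
  by apply: eq_bigr => k _; rewrite powNE (approx_pow k hg) // mulrC.
rewrite (@sum_widen _ (fun k => (k`!%:R)^-1 * (p ^+ k)`_i) i.+1 M) //; last first.
  by move=> k hk; rewrite coef_exp_low ?mulr0.
by apply: eq_bigr => k _; rewrite coefZ.
Qed.

Lemma approx_log M h p : approx M h p -> h 0%N = 1 ->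
  approx M (logS h) (\sum_(k < M) ((-1) ^+ k.+1 / k%:R) *: (p - 1) ^+ k).
Proof.
move=> hh h0 i hi.
have hu : approx M (addS h (scaleS (-1) (oneS F))) (p - 1).
  by apply: approx_add; [|rewrite -scaleN1r; apply: approx_scale; apply: approx_one].
have u0 : (p - 1)`_0 = 0 by rewrite -hu; [rewrite /addS /scaleS h0 /oneS /=; ring | lia].
rewrite /logS coef_sum.
transitivity (\sum_(0 <= k < i.+1) ((-1) ^+ k.+1 / k%:R) * ((p - 1) ^+ k)`_i).
  rewrite [RHS]big_ltn // invr0 mulr0 mul0r add0r.
  by apply: eq_bigr => k _; rewrite powNE (approx_pow k hu).
rewrite big_mkord.
rewrite (@sum_widen _ (fun k => ((-1) ^+ k.+1 / k%:R) * ((p - 1) ^+ k)`_i) i.+1 M) //; last first.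
  by move=> k hk; rewrite coef_exp_low ?mulr0.
by apply: eq_bigr => k _; rewrite coefZ.
Qed.

Lemma approx_inv M h p : approx M h p -> h 0%N != 0 ->
  approx M (invS h) ((h 0%N)^-1 *: \sum_(k < M) (1 - (h 0%N)^-1 *: p) ^+ k).
Proof.
move=> hh h0 i hi.
have hu : approx M (fun n => - (h n / h 0%N) + (n == 0%N)%:R) (1 - (h 0%N)^-1 *: p).
  by move=> j hj; rewrite coefB coefZ coef1 hh //; ring.
have u0 : (1 - (h 0%N)^-1 *: p)`_0 = 0 by rewrite -hu /= ?divff // ?addNr //; lia.
rewrite /invS /= coefZ coef_sum; congr (_ * _).
transitivity (\sum_(k < i.+1) ((1 - (h 0%N)^-1 *: p) ^+ k)`_i).
  by apply: eq_bigr => k _; rewrite powNE (approx_pow k hu).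
by apply: (@sum_widen _ (fun k => ((1 - (h 0%N)^-1 *: p) ^+ k)`_i)) => // k hk; exact: coef_exp_low.
Qed.

(* invS is the multiplicative inverse: the geometric series telescopes. *)
Lemma mul_invS h : h 0%N != 0 -> h * invS h = 1.
Proof.
move=> h0; apply: approx_ext => M; set u := 1 - (h 0%N)^-1 *: trunc M h.
have u0 : (0 < M)%N -> u`_0 = 0.
  by move=> M0; rewrite /u coefB coefZ coef1 coef_poly M0 mulVf // subrr.
exists (1 - u ^+ M); split; last first.
  apply: approx_eq; first exact: approx_one.
  move=> i hi.
  by rewrite coefB [X in _ = _ - X]coef_exp_low ?subr0 ?u0 //; apply: leq_ltn_trans hi.
apply: approx_eq.
  by apply: approx_mul; [apply: approx_trunc | apply: approx_inv h0; apply: approx_trunc].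
move=> i _; congr (_`_i); congr polyseq.
have -> : trunc M h = h 0%N *: (1 - u) by rewrite /u opprB addrC subrK scalerA divff // scale1r.
rewrite -scalerAl -scalerAr scalerA divff // scale1r.
under eq_bigr do rewrite scalerA mulVf // scale1r opprB addrC subrK.
by rewrite -(opprB (u ^+ M)) subrX1 -mulNr (opprB u 1).
Qed.

Lemma inv_unique g a b : g * a = 1 -> g * b = 1 -> a = b.
Proof. by move=> ha hb; rewrite -[a]mulr1 -hb mulrA [a * g]mulrC ha mul1r. Qed.

Lemma derivS_expS g : g 0%N = 0 -> derivS (expS g) = derivS g * expS g.
Proof.
move=> g0; apply: approx_ext => M; set p := trunc M.+1 g.
exists (p^`() * \sum_(k < M) (k`!%:R)^-1 *: p ^+ k); split.
  apply: approx_eq; first by apply: approx_deriv; apply: approx_exp => //; apply: approx_trunc.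
  move=> i _; congr (_`_i); congr polyseq.
  rewrite raddf_sum big_ord_recl /= expr0 derivZ derivC scaler0 add0r mulr_sumr -/p.
  apply: eq_bigr => k _.
  rewrite derivZ deriv_exp /= /bump /= add1n add0n -mulrnAr scalerAr -scaler_nat scalerA.
  by rewrite factS natrM invfM mulrAC mulVf ?mul1r //; exact: natf_neq0.
apply: approx_mul; first by apply: approx_deriv; apply: approx_trunc.
by apply: approx_exp => //; apply: approx_le; apply: approx_trunc.
Qed.

Lemma derivS_log h : h 0%N = 1 -> h * derivS (logS h) = derivS h.
Proof.
move=> h0; apply: approx_ext => M; set p := trunc M.+1 h; set u := p - 1.
have u0 : u`_0 = 0 by rewrite /u coefB coef_poly /= h0 coef1 subrr.
exists (p^`() - p^`() * (- u) ^+ M); split; last first.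
  apply: approx_eq; first by apply: approx_deriv; apply: approx_trunc.
  move=> i hi; rewrite coefB coefM big1 ?subr0 // => j _.
  by rewrite coef_exp_low ?mulr0 ?coefN ?u0 ?oppr0 //; have := ltn_ord j; lia.
apply: approx_eq.
  apply: approx_mul; first by apply: approx_le; apply: approx_trunc.
  by apply: approx_deriv; apply: approx_log => //; apply: approx_trunc.
move=> i _; congr (_`_i); congr polyseq.
rewrite raddf_sum big_ord_recl /= invr0 mulr0 scale0r deriv0 add0r -/p -/u.
have -> : \sum_(j < M) (((-1) ^+ (bump 0 j).+1 / (bump 0 j)%:R) *: u ^+ bump 0 j)^`()
   = p^`() * \sum_(j < M) (- u) ^+ j.
  rewrite mulr_sumr; apply: eq_bigr => j _.
  rewrite derivZ deriv_exp /= /bump /= add1n add0n -mulrnAr scalerAr -scaler_nat scalerA.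
  rewrite -[in RHS]scaleN1r exprZn /u derivB derivC subr0 -/u; congr (_ * (_ *: _)).
  rewrite -mulrA mulVf ?mulr1; last exact: natf_neq0.
  by rewrite !exprS !mulN1r opprK.
have geom : p * \sum_(j < M) (- u) ^+ j = 1 - (- u) ^+ M.
  have -> : p = - (- u - 1) by rewrite /u; ring.
  by rewrite mulNr -subrX1 opprB.
by rewrite mulrCA geom mulrBr mulr1.
Qed.

Lemma ode_zero h q d : h 0%N != 0 -> d 0%N = 0 -> h * derivS d = q * d -> d = 0.
Proof.
move=> h0 d0 E; suff low : forall n j, (j <= n)%N -> d j = 0.
  by apply/funext => k; apply: (low k k).
elim=> [|n IH] j hj; first by move: hj; rewrite leqn0 => /eqP ->.
case: (ltnP j n.+1) => hjn; first exact: IH.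
have -> : j = n.+1 by apply/eqP; rewrite eqn_leq hj.
have := congr1 (fun f : fps F => f n) E; rewrite /= !coefS_mul.
rewrite [RHS]big1; last by move=> k _; rewrite IH ?mulr0 // leq_subr.
rewrite big_ord_recl [X in _ + X]big1 ?addr0; last first.
  by move=> k _; rewrite /derivS IH ?mul0r ?mulr0 // lift0; have := ltn_ord k; lia.
rewrite /derivS /= subn0 => /eqP; rewrite !mulf_eq0 (negbTE h0) (negbTE (natf_neq0 n)) orbF.
by move/eqP.
Qed.

Lemma ode_unique h q (y z : fps F) : h 0%N != 0 -> y 0%N = z 0%N ->
  h * derivS y = q * y -> h * derivS z = q * z -> y = z.
Proof.
move=> h0 yz Ey Ez; apply/eqP; rewrite -subr_eq0; apply/eqP.
apply: (@ode_zero h q) => //; first by rewrite coefS_sub yz subrr.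
by rewrite derivS_sub mulrBr Ey Ez mulrBr.
Qed.

Lemma derivS_powC c h : h 0%N = 1 -> h * derivS (powC c h) = constS c * derivS h * powC c h.
Proof.
move=> h0; rewrite /powC scaleSE derivS_expS; last by rewrite coefS_mul0 logS0 mulr0.
by rewrite derivS_mul derivS_const mul0r add0r -(derivS_log h0); ring.
Qed.

Lemma powC_mul c (A B : fps F) : A 0%N = 1 -> B 0%N = 1 -> powC c A * powC c B = powC c (A * B).
Proof.
move=> A0 B0; have AB0 : (A * B) 0%N = 1 by rewrite coefS_mul0 A0 B0 mulr1.
apply: (@ode_unique (A * B) (constS c * derivS (A * B))).
- by rewrite AB0 oner_neq0.
- by rewrite coefS_mul0 !powC0 mulr1.
- transitivity (B * powC c B * (A * derivS (powC c A)) + A * powC c A * (B * derivS (powC c B))).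
    by rewrite derivS_mul; ring.
  by rewrite derivS_powC // derivS_powC // derivS_mul; ring.
- by rewrite derivS_powC.
Qed.

Lemma powC1 c : powC c (1 : fps F) = 1.
Proof.
apply: (@ode_unique 1 0); rewrite ?oner_neq0 ?powC0 //.
  by rewrite derivS_powC // derivS1; ring.
by rewrite derivS1; ring.
Qed.

Lemma powC_invS c (A : fps F) : A 0%N = 1 -> powC c (invS A) = invS (powC c A).
Proof.
move=> A0; have A0' : A 0%N != 0 by rewrite A0 oner_neq0.
apply: (@inv_unique (powC c A)); last by rewrite mul_invS // powC0 oner_neq0.
by rewrite powC_mul ?mul_invS ?powC1 // invS0 A0 invr1.
Qed.

Lemma powC_neg_nat h n : h 0%N = 1 -> powC (- n%:R) h = invS h ^+ n.
Proof.
move=> h0; have h0' : h 0%N != 0 by rewrite h0 oner_neq0.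
have hr := mul_invS h0'; set r := invS h in hr *.
have hdr : h * derivS r = - (derivS h * r).
  by apply/eqP; rewrite -subr_eq0 opprK addrC -derivS_mul hr derivS1.
apply: (@ode_unique h (constS (- n%:R) * derivS h)); rewrite ?derivS_powC //.
  by rewrite powC0 coefS_exp0 /r invS0 h0 invr1 expr1n.
rewrite derivS_pow constS_opp constS_nat; case: n => [|n] /=; first by ring.

transitivity (n.+1%:R * r ^+ n * (h * derivS r)); first by ring.
by rewrite hdr exprS; ring.
Qed.

Lemma compS_invS a h : a 0%N != 0 -> h 0%N = 0 -> compS (invS a) h = invS (compS a h).
Proof.
move=> a0 h0; have ah0 : compS a h 0%N != 0 by rewrite compS0.
apply: (@inv_unique (compS a h)); last exact: mul_invS.
by rewrite -compS_mul // mul_invS // compS1.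
Qed.

Lemma expS_comp y h : h 0%N = 0 -> expS (constS y * h) = compS (expS (constS y * Xs F)) h.
Proof.
move=> h0; have yh0 : (constS y * h) 0%N = 0 by rewrite coefS_mul0 h0 mulr0.
have yX0 : (constS y * Xs F) 0%N = 0 by rewrite coefS_mul0 coefS_X0 mulr0.
apply: (@ode_unique 1 (constS y * derivS h)); rewrite ?oner_neq0 ?compS0 ?expS0 //.
  by rewrite derivS_expS // derivS_mul derivS_const mul0r add0r mul1r.
rewrite derivS_comp // derivS_expS // derivS_mul derivS_const mul0r add0r derivS_X mulr1.
by rewrite compS_mul // compS_const // mul1r; ring.
Qed.

End ExpLog.

Section Lagrange.
Variable F : fieldType.
Hypothesis charF0 : [pchar F] =i pred0.
Implicit Types a b c : fps F.

Lemma coefS_deriv_pow a m : (derivS a * a ^+ m) m = (a ^+ m.+1) m.+1.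
Proof.
have := congr1 (fun b : fps F => b m) (derivS_pow a m.+1).
rewrite /= {1}/derivS -mulrA -constS_nat coefS_constM mulrC [_ * derivS a]mulrC.
by move/(mulfI (natf_neq0 charF0 m)).
Qed.

Variables psi rho : fps F.
Hypothesis psi_rho : psi * rho = 1.
Let f := Xs F * psi.

Lemma lagrange_kernel m : (derivS f * rho ^+ m.+1) m = (m == 0%N)%:R.
Proof.
have dpr : derivS psi * rho = - (psi * derivS rho).
  by apply/eqP; rewrite -subr_eq0 opprK -derivS_mul psi_rho derivS1.
have df : derivS f = psi + Xs F * derivS psi by rewrite /f derivS_mul derivS_X mul1r.
rewrite df; case: m => [|m].
  by rewrite expr1 mulrDl -mulrA psi_rho coefS_add coefS_XM0 addr0.
have -> : (psi + Xs F * derivS psi) * rho ^+ m.+2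
          = (psi * rho) * rho ^+ m.+1 + Xs F * ((derivS psi * rho) * rho ^+ m.+1).
  by rewrite exprS; ring.
rewrite dpr.
have -> : Xs F * (- (psi * derivS rho) * rho ^+ m.+1)
          = - (Xs F * ((psi * rho) * (derivS rho * rho ^+ m))).
  by rewrite exprS; ring.
by rewrite psi_rho !mul1r coefS_add coefS_opp coefS_XMS coefS_deriv_pow subrr.
Qed.

Lemma lagrange_monomial k n : (k <= n)%N ->
  (f ^+ k * (derivS f * rho ^+ n.+1)) n = (k == n)%:R.
Proof.
move=> kn; have -> : n = (k + (n - k))%N by rewrite subnKC.
set m := (n - k)%N.
have -> : f ^+ k * (derivS f * rho ^+ (k + m).+1)
          = Xs F ^+ k * (derivS f * rho ^+ m.+1) * (psi * rho) ^+ k.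
  by rewrite /f !exprMn -addnS exprD; ring.
rewrite psi_rho expr1n mulr1 coefS_XnM ltnNge leq_addr /= addKn lagrange_kernel.
by rewrite -{1}(addn0 k) eqn_add2l eq_sym.
Qed.

Theorem lagrange_inversion K n :
  K n = (compS K f * derivS f * rho ^+ n.+1) n.
Proof.
have f0 : f 0%N = 0 by rewrite /f coefS_XM0.
rewrite -mulrA (@coefS_mul_eq _ (compS K f) (\sum_(k < n.+1) constS (K k) * f ^+ k)); last first.
  by move=> i hi; apply: coefS_comp_trunc.
rewrite mulr_suml coefS_sum big_ord_recr /= -mulrA coefS_constM lagrange_monomial //.
rewrite eqxx mulr1 big1 ?add0r // => k _.
rewrite -mulrA coefS_constM lagrange_monomial ?(ltn_eqF (ltn_ord k)) ?mulr0 //.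
exact: ltnW.
Qed.

End Lagrange.

Section ShefferLog.
Variable F : fieldType.
Hypothesis charF0 : [pchar F] =i pred0.
Implicit Types w : fps F.

Let f := log1p F.
Let psi := divX f.

Lemma log1p0 : f 0%N = 0.
Proof. exact: logS0. Qed.

Lemma log1p_div_t0 : psi 0%N = 1.
Proof.
rewrite /psi /divX /f /log1p /logS big_nat1 powNE expr1.
by rewrite /addS /scaleS /oneS /Xs /= expr2 mulrN1 opprK divr1 mulr0 !addr0 add0r mul1r.
Qed.

Lemma expm1_div_t0 : expm1_div_t F 0%N = 1.
Proof.
rewrite /expm1_div_t /divX /expS !big_ord_recr big_ord0 /=.
by rewrite mulSE oneSE mulr1 /oneS /Xs /= mul0r !add0r divr1.
Qed.

Lemma derivS_log1p : (1 + Xs F) * derivS f = 1.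
Proof.
by rewrite /f /log1p (derivS_log charF0) ?coefS_add ?addr0 // derivS_add derivS1 derivS_X add0r.
Qed.

Lemma log1p_left_inverse w : w 0%N = 0 -> compS f w = Xs F -> compS w f = Xs F.
Proof.
move=> w0 fw.
have dw : derivS w = 1 + w.
  have e1 := congr1 (@derivS F) fw; rewrite derivS_comp // derivS_X in e1.
  have := congr1 (fun a => compS a w) derivS_log1p.
  rewrite /= compS_mul // compS_add // compS1 // compS_X // => e2.
  by apply: (@inv_unique _ (compS (derivS f) w)); rewrite // mulrC.
apply/eqP; rewrite -subr_eq0; apply/eqP.
apply: (@ode_zero _ charF0 (1 + Xs F) 1).
- by rewrite coefS_add coefS_X0 addr0 oner_neq0.
- by rewrite coefS_sub compS0 w0 coefS_X0 subrr.
- rewrite derivS_sub derivS_comp ?log1p0 // dw compS_add ?log1p0 // compS1 ?log1p0 //.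
  by rewrite derivS_X mulrBr mulrCA derivS_log1p; ring.
Qed.

Lemma sheffer_genfun_log1p alpha x w : w 0%N = 0 -> compS f w = Xs F ->
  compS (mulS (invS (compS (powC alpha (expm1_div_t F)) w)) (expS (scaleS x w))) f
  = mulS (powC alpha (invS (expm1_div_t F))) (expS (scaleS x (Xs F))).
Proof.
move=> w0 fw; have wf := log1p_left_inverse w0 fw.
have g0 : compS (powC alpha (expm1_div_t F)) w 0%N != 0 by rewrite compS0 powC0 oner_neq0.
rewrite mulSE compS_mul ?log1p0 // compS_invS ?log1p0 // compSA ?log1p0 // wf compS_Xr.
by rewrite powC_invS ?expm1_div_t0 // !scaleSE expS_comp ?compSA ?log1p0 // wf compS_Xr.
Qed.

Lemma coef_deriv_comp_log1p (gam beta : fps F) n : compS gam f = beta ->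
  derivS gam n = (powC (- n.+1%:R) psi * derivS beta) n.
Proof.
move=> gam_f; have psi0 : psi 0%N != 0 by rewrite log1p_div_t0 oner_neq0.
rewrite (lagrange_inversion charF0 (mul_invS psi0)).
rewrite /psi mulX_divX ?log1p0 // -derivS_comp ?log1p0 // gam_f.
by rewrite (powC_neg_nat charF0 _ log1p_div_t0) mulrC.
Qed.

End ShefferLog.

Lemma egf_mul_deriv (F : fieldType) (u v : fps F) n :
  n`!%:R * (u * derivS v) n
  = \sum_(l < n.+1) 'C(n, l)%:R * (l`!%:R * u l) * ((n.+1 - l)`!%:R * v (n.+1 - l)%N).
Proof.
rewrite coefS_mul mulr_sumr; apply: eq_bigr => l _.
have hl : (l <= n)%N by rewrite -ltnS.
rewrite /derivS subSn // factS.
have := congr1 (fun m : nat => m%:R : F) (bin_fact hl); rewrite /= !natrM => <-.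
by ring.
Qed.

Unset Implicit Arguments.
Theorem mainTheorem6 (F : fieldType) (charF0 : [pchar F] =i pred0)
  (alpha : F) (S : nat -> {poly F})
  (hS : Sheffer (powC alpha (expm1_div_t F)) (log1p F) S)
  (n : nat) (hn : (1 <= n)%N) (x : F) :
  (S n).[x] = \sum_(l < n) ('C(n.-1, l))%:R * narumi (- (n%:R)) l
                * bernoulliA alpha (n - l) x.
Proof.
case: hS => _ _ _ [w [w0 fw /(_ x) genS]]; case: n hn => // n _.
set gam := mulS _ _ in genS.
set beta := mulS (powC alpha (invS (expm1_div_t F))) (expS (scaleS x (Xs F))).
have gam_f : compS gam (log1p F) = beta.
  exact: sheffer_genfun_log1p (funext fw).
(* S_(n+1)(x) = (n+1)! [t^(n+1)] gam = n! [t^n] gam'. *)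
have -> : (S n.+1).[x] = n`!%:R * derivS gam n.
  rewrite /derivS -genS factS natrM; field.
  by rewrite (fact_neq0 charF0) addrC natr1 (natf_neq0 charF0).
(* Lagrange inversion, then the exponential convolution: narumi and
   bernoulliA are by definition the exponential coefficients involved. *)
by rewrite (coef_deriv_comp_log1p charF0 _ gam_f) egf_mul_deriv.
Qed.
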